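(* Let $a_0,a_1,a_2$ be complex numbers with $a_1\neq 0$ and $a_2\neq 0$. Let $(F(n,k))_{n\ge 0,\,k\in\mathbb{Z}}$ be defined by $F(0,0)=1$, $F(0,k)=0$ for $k\neq 0$, $F(n,k)=0$ for $k<0$, and for $n\ge 1$ and all $k$, \[ F(n,k)=(a_2 n+a_1 k+a_0)\,F(n-1,k)+F(n-1,k-1). \] Then for all integers $n,k\ge 0$, \[ F(n,k)=\frac{1}{a_1^k\,k!}\sum_{j=0}^{k}(-1)^{k-j}\binom{k}{j}\prod_{r=1}^{n}\bigl(a_0+a_1 j+r a_2\bigr). \]
   Context: For $n=0$ the empty product equals $1$. *)

From mathcomp Require Import all_boot all_order all_algebra.
From mathcomp Require Import complex.
From mathcomp Require Import reals.
Set Implicit Arguments. Unset Strict Implicit. Unset Printing Implicit Defensive.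
Import Order.TTheory GRing.Theory Num.Theory.
Local Open Scope ring_scope.

Fixpoint Farr (C : fieldType) (a0 a1 a2 : C) (n : nat) (k : int) : C :=
  match n with
  | 0%N => if k == 0 then 1 else 0
  | m.+1 => if (k < 0)%R then 0 else
      (a2 * (m.+1)%:R + a1 * k%:~R + a0) * Farr a0 a1 a2 m k
      + Farr a0 a1 a2 m (k - 1)
  end.

(* Multiply the claimed identity by [a1 ^+ k * k`!]; then both sides satisfy
   G(n+1, k+1) = c G(n, k+1) + a1 (k+1) G(n, k) with c = a2 (n+1) + a1 (k+1) + a0.
   For the right-hand side, a k-th finite difference in j, write the new factor
   a0 + a1 j + (n+1) a2 of the product as c - a1 (k+1-j) and use
   (k+1-j) 'C(k+1, j) = (k+1) 'C(k, j).  At n = 0 the product is 1, whose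
   finite differences of positive order vanish. *)

From mathcomp Require Import all_boot all_order all_algebra.
From mathcomp Require Import ring.
From mathcomp Require Import complex.
From mathcomp Require Import reals.
Set Implicit Arguments. Unset Strict Implicit. Unset Printing Implicit Defensive.
Import Order.TTheory GRing.Theory Num.Theory.
Local Open Scope ring_scope.

Section FiniteDifference.
Variable R : comPzRingType.

Definition findiff (f : nat -> R) (k : nat) : R :=
  \sum_(j < k.+1) (-1) ^+ (k - j) * 'C(k, j)%:R * f j.

Lemma eq_findiff (f g : nat -> R) (k : nat) : f =1 g -> findiff f k = findiff g k.
Proof. by move=> eq_fg; apply: eq_bigr => j _; rewrite eq_fg. Qed.

Lemma findiffB (f g : nat -> R) (k : nat) :
  findiff (fun j => f j - g j) k = findiff f k - findiff g k.
Proof. by rewrite /findiff -sumrB; apply: eq_bigr => j _; ring. Qed.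

Lemma findiffZ (c : R) (f : nat -> R) (k : nat) :
  findiff (fun j => c * f j) k = c * findiff f k.
Proof. by rewrite /findiff mulr_sumr; apply: eq_bigr => j _; ring. Qed.

Lemma findiff0 (f : nat -> R) : findiff f 0 = f 0%N.
Proof. by rewrite /findiff big_ord1 expr0 bin0 mul1r mul1r. Qed.

Lemma findiff_cst (c : R) (k : nat) : findiff (fun=> c) k.+1 = 0.
Proof.
rewrite /findiff -mulr_suml.
have := exprDn (-1 : R) 1 k.+1; rewrite addNr expr0n /= => /esym.
under eq_bigr => j _ do rewrite expr1n mulr1 -mulr_natr.
by move=> ->; rewrite mul0r.
Qed.

Lemma findiff_weight (f : nat -> R) (k : nat) :
  findiff (fun j => (k.+1 - j)%:R * f j) k.+1 = - (k.+1%:R * findiff f k).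
Proof.
rewrite /findiff big_ord_recr /= subnn mul0r mulr0 addr0.
rewrite mulr_sumr -sumrN; apply: eq_bigr => j _.
have le_jk : (j <= k)%N := ltn_ord j.
have bin_weight : (k.+1 - j)%:R * 'C(k.+1, j)%:R = k.+1%:R * 'C(k, j)%:R :> R.
  by rewrite -!natrM -mul_bin_down.
have sign : (-1) ^+ (k.+1 - j) = - (-1) ^+ (k - j) :> R.
  by rewrite subSn // exprS mulN1r.
rewrite sign; transitivity (- ((-1) ^+ (k - j) * f j *
                               ((k.+1 - j)%:R * 'C(k.+1, j)%:R))); first ring.
by rewrite bin_weight; ring.
Qed.

Lemma findiff_mul_shift (f : nat -> R) (c a : R) (k : nat) :
  findiff (fun j => f j * (c - a * (k.+1 - j)%:R)) k.+1 =
  c * findiff f k.+1 + a * k.+1%:R * findiff f k.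
Proof.
have split_term j :
    f j * (c - a * (k.+1 - j)%:R) = c * f j - a * ((k.+1 - j)%:R * f j).
  by ring.
rewrite (eq_findiff k.+1 split_term) findiffB !findiffZ findiff_weight; ring.
Qed.

End FiniteDifference.

Section ExplicitFormula.
Variables (C : fieldType) (a0 a1 a2 : C).

Definition Fprod (n j : nat) : C :=
  \prod_(1 <= r < n.+1) (a0 + a1 * j%:R + r%:R * a2).

Lemma Fprod0 (j : nat) : Fprod 0 j = 1.
Proof. by rewrite /Fprod big_geq. Qed.

Lemma FprodS (n j : nat) :
  Fprod n.+1 j = Fprod n j * (a0 + a1 * j%:R + n.+1%:R * a2).
Proof. by rewrite /Fprod big_nat_recr. Qed.

Local Notation F := (Farr a0 a1 a2).

Lemma Farr_S0 (n : nat) : F n.+1 0 = (a2 * n.+1%:R + a0) * F n 0.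
Proof. by rewrite /= mulr0 addr0 sub0r; case: n => [|n] /=; rewrite addr0. Qed.

Lemma Farr_SS (n k : nat) :
  F n.+1 k.+1 = (a2 * n.+1%:R + a1 * k.+1%:R + a0) * F n k.+1 + F n k.
Proof. by rewrite /= (_ : Posz k.+1 - 1 = k) // -addn1 PoszD addrK. Qed.

Lemma Farr_scaled (n k : nat) :
  F n k * (a1 ^+ k * k`!%:R) = findiff (Fprod n) k.
Proof.
elim: n k => [|n IHn] [|k].
- by rewrite findiff0 Fprod0 !mulr1.
- by rewrite (eq_findiff k.+1 Fprod0) findiff_cst /= mul0r.
- by rewrite Farr_S0 -mulrA IHn !findiff0 FprodS; ring.
set c := a2 * n.+1%:R + a1 * k.+1%:R + a0.
have new_factor j : (j <= k.+1)%N ->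
    a0 + a1 * j%:R + n.+1%:R * a2 = c - a1 * (k.+1 - j)%:R.
  by move=> le_jk; rewrite /c natrB //; ring.
have -> : findiff (Fprod n.+1) k.+1 =
          findiff (fun j => Fprod n j * (c - a1 * (k.+1 - j)%:R)) k.+1.
  by apply: eq_bigr => j _; rewrite FprodS new_factor // -ltnS.
rewrite findiff_mul_shift -!IHn Farr_SS factS natrM exprS /c; ring.
Qed.

End ExplicitFormula.

Local Open Scope complex_scope.

Theorem mainTheorem1 (R : realType) (a0 a1 a2 : R[i]) :
  a1 != 0 -> a2 != 0 ->
  forall n k : nat,
    Farr a0 a1 a2 n k%:Z =
    (a1 ^+ k * (k`!)%:R)^-1 *
    \sum_(j < k.+1) ((-1) ^+ (k - j) * ('C(k, j))%:R *
       \prod_(1 <= r < n.+1) (a0 + a1 * (j%:R) + r%:R * a2)).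
Proof.
move=> a1_neq0 _ n k.
have scale_neq0 : a1 ^+ k * (k`!)%:R != 0.
  by rewrite mulf_neq0 ?expf_neq0 // pnatr_eq0 -lt0n fact_gt0.
apply: (mulIf scale_neq0); rewrite mulrAC mulVf // mul1r.
exact: Farr_scaled.
Qed.
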